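(* Let $\theta_{\min}\ge 1/2$, and let $\mathcal S$ be a compatible community of a population with minimum participation threshold $\theta_{\min}$, with $|\mathcal S|\ge k$. Then there exist at least $k(2\theta_{\min}-1)$ users $i\in\mathcal S$ which are compatible with all other users in $\mathcal S$, i.e., whose speech point $p_i$ lies in $[l_j,r_j]$ for every $j\in\mathcal S$.
   Context: Users $1,\dots,n$ each have a closed interval $[l_i,r_i]$, a speech point $p_i\in[l_i,r_i]$ and a participation threshold $\theta_i\in[0,1]$, with $\theta_{\min}=\min_i\theta_i$. A set $\mathcal S$ of users is a compatible community if for every $i\in\mathcal S$, $|\{j\in\mathcal S\setminus\{i\}:p_j\in[l_i,r_i]\}|\ge\theta_i|\mathcal S\setminus\{i\}|$. *)

From mathcomp Require Import all_boot all_order all_algebra.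
Set Implicit Arguments. Unset Strict Implicit. Unset Printing Implicit Defensive.
Import Order.TTheory GRing.Theory Num.Theory.
Local Open Scope ring_scope.

(* A population: users of a finite type U, user i has interval [l i, r i],
   speech point p i and participation threshold theta i. *)
Definition in_itv (R : realFieldType) (a b x : R) : bool := (a <= x) && (x <= b).

Definition compatible_community (R : realFieldType) (U : finType)
  (l r p theta : U -> R) (S : {set U}) : Prop :=
  forall i, i \in S ->
    theta i * (#|S :\ i|)%:R <=
      (#|[set j in S :\ i | in_itv (l i) (r i) (p j)]|)%:R.

Definition universally_compatible (R : realFieldType) (U : finType)
  (l r p : U -> R) (S : {set U}) : {set U} :=
  [set i in S | [forall j in S, in_itv (l j) (r j) (p i)]].

From Pilot Require Import Defs.
From mathcomp Require Import all_boot all_order all_algebra.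
From mathcomp Require Import lra.
Import Order.TTheory GRing.Theory Num.Theory.
Set Implicit Arguments. Unset Strict Implicit.
Local Open Scope ring_scope.

(* Let a be a member of S with the largest left end point and b one with the
   smallest right end point.  Any j in S whose speech point lies in both
   [l a, r a] and [l b, r b] lies in [l a, r b], which is contained in every
   interval of S, so j is universally compatible.  By compatibility at most a
   fraction 1 - theta a of S \ {a} misses [l a, r a], and likewise for b, so
   with n = |S| at least n - 2 (1 - theta_min) (n - 1) >= n (2 theta_min - 1)
   members of S are universally compatible. *)

Section Community.

Variables (R : realFieldType) (U : finType) (l r p theta : U -> R).
Variable S : {set U}.

Definition outsiders (a : U) : {set U} :=
  [set j in S :\ a | ~~ Defs.in_itv (l a) (r a) (p j)].

Lemma card_outsiders_le a :
  compatible_community l r p theta S -> a \in S ->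
  (#|outsiders a|)%:R <= (1 - theta a) * ((#|S|)%:R - 1).
Proof.
move=> hS aS; have := hS a aS.
set G := [set j in S :\ a | _].
have splitS : (#|G| + #|outsiders a|)%N = #|S :\ a|.
  rewrite -(cardsID [set j | Defs.in_itv (l a) (r a) (p j)] (S :\ a)).
  by congr (_ + _)%N; apply: eq_card => j; rewrite !inE // andbC.
have cardS : (#|S|)%:R - 1 = (#|S :\ a|)%:R :> R.
  by rewrite (cardsD1 a S) aS natrD addrC addKr.
rewrite cardS -splitS natrD; lra.
Qed.

Lemma subset_universally_compatible_outsiders a b :
  (forall i, l i <= p i <= r i) ->
  (forall i, i \in S -> l i <= l a) -> (forall i, i \in S -> r b <= r i) ->
  S \subset universally_compatible l r p S :|: (outsiders a :|: outsiders b).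
Proof.
move=> hp la_max rb_min; apply/subsetP => j jS.
have [/andP[laj pjb] | ] := boolP (l a <= p j <= r b).
  rewrite !inE jS /=; apply/orP; left; apply/forall_inP => i iS.
  by rewrite /Defs.in_itv (le_trans (la_max i iS) laj) (le_trans pjb (rb_min i iS)).
have outsiderP c : ~~ Defs.in_itv (l c) (r c) (p j) -> j \in outsiders c.
  move=> out; rewrite !inE jS out !andbT.
  by apply: contraNneq out => ->; rewrite /Defs.in_itv hp.
rewrite negb_and => /orP[pj_lt | pj_gt]; apply/setUP; right; apply/setUP.
  by left; apply: outsiderP; rewrite /Defs.in_itv (negbTE pj_lt).
by right; apply: outsiderP; rewrite /Defs.in_itv (negbTE pj_gt) andbF.
Qed.

End Community.

Theorem lemma16 (R : realFieldType) (U : finType) (l r p theta : U -> R)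
  (theta_min : R) (k : nat) (S : {set U})
  (hp : forall i, l i <= p i /\ p i <= r i)
  (htheta : forall i, 0 <= theta i /\ theta i <= 1)
  (hmin_le : forall i, theta_min <= theta i)
  (hmin_att : exists i, theta i = theta_min)
  (hhalf : 1 / 2 <= theta_min)
  (hS : compatible_community l r p theta S)
  (hk : (k <= #|S|)%N) :
  k%:R * (2 * theta_min - 1) <= (#|universally_compatible l r p S|)%:R.
Proof.
have [S0 | [i0 i0S]] := set_0Vmem S.
  by move: hk; rewrite S0 cards0 leqn0 => /eqP ->; rewrite mul0r.
have [a aS la_max] := arg_maxP l i0S.
have [b bS rb_min] := arg_minP r i0S.
have hp' i : l i <= p i <= r i by case: (hp i) => -> ->.
have cover := subset_universally_compatible_outsiders hp' la_max rb_min.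
have cardS : (#|S| <= #|universally_compatible l r p S|
                      + (#|outsiders l r p S a| + #|outsiders l r p S b|))%N.
  apply: (leq_trans (subset_leq_card cover)).
  by rewrite (leq_trans (leq_card_setU _ _)) // leq_add2l leq_card_setU.
move: cardS; rewrite -(ler_nat R) !natrD.
have := card_outsiders_le hS aS; have := card_outsiders_le hS bS.
have := hmin_le a; have := hmin_le b; have [_ ta_le1] := htheta a.
have : 1 <= (#|S|)%:R :> R by rewrite ler1n card_gt0; apply/set0Pn; exists i0.
have : k%:R <= (#|S|)%:R :> R by rewrite ler_nat.
nra.
Qed.
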